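(* Let $\mathcal{X}$ be an instance space and $\mathcal{Y}$ a finite label set. Let $\hat f:\mathcal{X}\to\mathbb{P}(\mathcal{Y})$ be a fixed probabilistic classifier (e.g. trained on a separate proper training set, independent of the data below), and write $\hat f(x)_y$ for the probability it assigns to label $y$ at $x$. Let $(x_j,y_j)$, $j\in\mathcal{I}_2$, be calibration points, each observed only through a candidate set $S_j\subseteq\mathcal{Y}$ with $y_j\in S_j$, and let $(x_{new},y_{new})$ be a test point. Define the multiset of scores $$\mathcal{E}_{\max}:=\Big\{\,1-\min_{y\in S_j}\hat f(x_j)_y : j\in\mathcal{I}_2\Big\}.$$ If the points $\{(x_j,y_j):j\in\mathcal{I}_2\}\cup\{(x_{new},y_{new})\}$ are exchangeable, then for every $\epsilon\in(0,1]$, $$\mathbb{P}\big(y_{new}\in\mathcal{T}(x_{new},\hat f,\mathcal{E}_{\max},\epsilon)\big)\ge 1-\epsilon .$$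
   Context: For a finite multiset $\mathcal{E}$ of real numbers and $\epsilon\in(0,1]$, the critical score $q(\mathcal{E},\epsilon)$ is the $\lceil(1+|\mathcal{E}|)(1-\epsilon)\rceil$-th smallest element of $\mathcal{E}$ (counted with multiplicity); if this index exceeds $|\mathcal{E}|$, $q(\mathcal{E},\epsilon)$ is taken to be $+\infty$. For $x\in\mathcal{X}$, the prediction set is $\mathcal{T}(x,\hat f,\mathcal{E},\epsilon):=\{y\in\mathcal{Y}:\hat f(x)_y\ge 1-q(\mathcal{E},\epsilon)\}$. *)

From HB Require Import structures.
From mathcomp Require Import all_boot all_order all_algebra perm.
From mathcomp Require Import all_classical all_reals all_analysis.
Set Implicit Arguments. Unset Strict Implicit. Unset Printing Implicit Defensive.
Import Order.TTheory GRing.Theory Num.Theory.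
Local Open Scope classical_set_scope.
Local Open Scope ring_scope.

Definition crit_index (R : realType) (m : nat) (eps : R) : int :=
  Num.ceil ((1 + m%:R) * (1 - eps)).

(* q(E, eps): the k-th smallest element of E (with multiplicity), +oo if
   k > |E|.  (k <= 0 only happens for eps = 1; convention: -oo there.) *)
Definition critical_score (R : realType) (E : seq R) (eps : R) : \bar R :=
  let k := crit_index (size E) eps in
  if (k <= 0)%R then -oo%E
  else if (size E < `|k|)%N then +oo%E
  else ((sort <=%R E)`_(`|k|.-1))%:E.

Definition conf_set (R : realType) (X : Type) (Y : finType)
  (f : X -> Y -> R) (x : X) (E : seq R) (eps : R) : {set Y} :=
  [set y | (1%:E - critical_score E eps <= (f x y)%:E)%E].

(* min over a (nonempty) set of labels of f(x)_y; since f(x) is a probability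
   vector (values <= 1), the neutral element 1 does not affect the minimum. *)
Definition min_on (R : realType) (X : Type) (Y : finType)
  (f : X -> Y -> R) (x : X) (S : {set Y}) : R :=
  \big[Num.min/1]_(y in S) f x y.

Definition E_max (R : realType) (X : Type) (Y : finType) (n : nat)
  (f : X -> Y -> R) (xc : 'I_n -> X) (S : 'I_n -> {set Y}) : seq R :=
  [seq 1 - min_on f (xc j) (S j) | j <- enum 'I_n].

(* Exchangeability of the random points (x_i, y_i), i < N: the joint law is
   invariant under every permutation of the indices, expressed as equality of
   the laws on the generating pi-system of measurable rectangles
   prod_i (A_i x B_i) of the product sigma-algebra (Y carries the discrete
   sigma-algebra). *)
Definition exchangeable d (Omega : measurableType d) (R : realType)
  (P : probability Omega R) dX (X : measurableType dX) (Y : finType) (N : nat)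
  (x : 'I_N -> Omega -> X) (y : 'I_N -> Omega -> Y) : Prop :=
  forall (s : {perm 'I_N}) (A : 'I_N -> set X) (B : 'I_N -> set Y),
    (forall i, measurable (A i)) ->
    P (\bigcap_(i in [set: 'I_N]) [set w | A i (x (s i) w) /\ B i (y (s i) w)])
    = P (\bigcap_(i in [set: 'I_N]) [set w | A i (x i w) /\ B i (y i w)]).

From HB Require Import structures.
From mathcomp Require Import all_boot all_order all_algebra perm.
From mathcomp Require Import all_classical all_reals all_analysis.
From mathcomp Require Import measurable_realfun.
Set Implicit Arguments. Unset Strict Implicit. Unset Printing Implicit Defensive.
Import Order.TTheory GRing.Theory Num.Theory.
Local Open Scope ring_scope.

(* Put r_i = 1 - f(x_i)(y_i) for all n+1 points and call i low when fewer than
   K = ceil((n+1)(1-eps)) of the r_j are strictly below r_i.  In every outcome at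
   least K indices are low (a minimal score among the other indices would itself
   be low), and exchangeability makes the n+1 events "i is low" equiprobable, so
   the test point is low with probability at least K/(n+1) >= 1 - eps.  Since
   y_j lies in S_j, the calibration score 1 - min_{S_j} f(x_j) dominates r_j; so
   if the test point is low, fewer than K entries of E_max are below its score,
   i.e. the score is at most the K-th smallest entry of E_max and y_new lies in
   the prediction set.  Exchangeability is only assumed on measurable
   rectangles; it extends to the events above by uniqueness of measures that
   agree on a pi-system generating the sigma-algebra. *)

Lemma le_nth_sort_count (R : realDomainType) (s : seq R) (K : nat) (t : R) :
  (0 < K <= size s)%N ->
  (t <= (sort <=%R s)`_K.-1) = (count (fun v => (v < t)%R) s < K)%N.
Proof.
case/andP=> K_gt0 K_le; rewrite -(count_sort <=%R).
set s' := sort _ s; have s'_sorted : sorted <=%R s' by apply: sort_sorted; exact: le_total.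
have size_s' : size s' = size s by rewrite size_sort.
have le_nth i j : (i <= j < size s')%N -> s'`_i <= s'`_j.
  by case/andP=> ij js; apply: le_sorted_leq_nth => //; rewrite inE (leq_ltn_trans ij).
have Km1_lt : (K.-1 < size s')%N by rewrite prednK // size_s'.
have [t_le | lt_t] := lerP t s'`_K.-1; apply/esym.
- rewrite -[s'](cat_take_drop K.-1) count_cat.
  have -> : count (fun v => (v < t)%R) (drop K.-1 s') = 0%N.
    apply/eqP; rewrite -leqn0 leqNgt -has_count; apply/hasP => -[_ /(nthP 0)[i i_lt <-]].
    rewrite size_drop ltn_subRL in i_lt; rewrite nth_drop ltNge (le_trans t_le) //.
    by rewrite le_nth // leq_addr.
  by rewrite addn0 (leq_ltn_trans (count_size _ _)) // size_take Km1_lt prednK.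
- apply/negbTE; rewrite -leqNgt -[s'](cat_take_drop K) count_cat.
  apply: leq_trans (leq_addr _ _).
  have size_take_K : size (take K s') = K by rewrite size_takel ?size_s'.
  rewrite -{1}size_take_K -count_predT; apply/eq_leq/eq_in_count.
  move=> v /(nthP 0)[i]; rewrite size_take_K => i_lt <-.
  rewrite nth_take // (le_lt_trans _ lt_t) // le_nth //.
  by rewrite -ltnS prednK // i_lt size_s'.
Qed.

Definition score_rank (T : finType) (R : realDomainType) (r : T -> R) (i : T) : nat :=
  #|[set j | r j < r i]|.

Lemma score_rank_perm (T : finType) (R : realDomainType) (r : T -> R) (s : {perm T}) i :
  score_rank (r \o s) i = score_rank r (s i).
Proof.
rewrite /score_rank -[RHS](card_preimset _ (@perm_inj _ s)).
by apply: eq_card => j; rewrite !inE.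
Qed.

Lemma leq_card_score_rank_lt (T : finType) (R : realDomainType) (r : T -> R) (K : nat) :
  (K <= #|T|)%N -> (K <= #|[set i | (score_rank r i < K)%N]|)%N.
Proof.
move=> K_le; set low := [set i | _]; rewrite leqNgt; apply/negP => low_lt.
have /card_gt0P[i0 i0_high] : (0 < #|~: low|)%N.
  by rewrite -(ltn_add2l #|low|) addn0 cardsC (leq_trans low_lt).
have [i i_high i_min] := arg_minP r i0_high.
have : i \in low.
  rewrite inE; apply: leq_ltn_trans low_lt; apply/subset_leq_card/fintype.subsetP => j.
  rewrite !inE => rji; apply/negPn/negP => j_high.
  have : j \in ~: low by rewrite finset.in_setC inE.
  by move/i_min; rewrite leNgt rji.
by move=> i_low; have : i \in ~: low := i_high; rewrite finset.in_setC i_low.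
Qed.

Lemma count_enum (T : finType) (P : pred T) : count P (enum T) = #|[set t | P t]|.
Proof.
rewrite cardE /enum_mem size_filter count_filter; apply: eq_count => t.
by rewrite !inE andbT.
Qed.

Section prediction_set.
Context (R : realType) (X : Type) (Y : finType) (f : X -> Y -> R).

Lemma crit_index_le0 (m : nat) (eps : R) : crit_index m eps <= 0 -> 1 - eps <= 0.
Proof.
move=> k_le0; have : (1 + m%:R) * (1 - eps) <= 0.
  by apply: le_trans (ceil_ge _) _; rewrite lerz0.
by rewrite pmulr_rle0 // addrC natr1 ltr0Sn.
Qed.

Lemma le_crit_index_div (m : nat) (eps : R) :
  0 < crit_index m eps -> 1 - eps <= `|crit_index m eps|%:R / m.+1%:R.
Proof.
move=> k_gt0; rewrite ler_pdivlMr ?ltr0Sn // mulrC -natr1 addrC.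
have := ceil_ge ((1 + m%:R) * (1 - eps)); rewrite -/(crit_index m eps).
rewrite -[crit_index m eps]gez0_abs; last exact: ltW.
by rewrite -pmulrn.
Qed.

Lemma conf_set_pinfty (x0 : X) (E : seq R) (eps : R) :
  0 < crit_index (size E) eps -> (size E < `|crit_index (size E) eps|)%N ->
  conf_set f x0 E eps = [set: Y].
Proof.
move=> k_gt0 E_lt; apply/setP => l.
by rewrite finset.in_setT finset.in_set /critical_score /= (lt_geF k_gt0) E_lt /= leNye.
Qed.

Lemma mem_conf_set_count (x0 : X) (E : seq R) (eps : R) (l : Y) :
  0 < crit_index (size E) eps -> (`|crit_index (size E) eps| <= size E)%N ->
  (l \in conf_set f x0 E eps) =
  (count (fun v => (v < 1 - f x0 l)%R) E < `|crit_index (size E) eps|)%N.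
Proof.
move=> k_gt0 k_le.
rewrite finset.in_set /critical_score /= (lt_geF k_gt0) ltnNge k_le /= -EFinB lee_fin.
rewrite -le_nth_sort_count ?k_le ?absz_gt0 ?gt_eqF //.
by rewrite lerBlDr addrC -lerBlDr.
Qed.

Lemma size_E_max (n : nat) (xc : 'I_n -> X) (S : 'I_n -> {set Y}) :
  size (E_max f xc S) = n.
Proof. by rewrite size_map size_enum_ord. Qed.

Lemma mem_conf_set_E_max (n : nat) (x0 : X) (xc : 'I_n -> X) (S : 'I_n -> {set Y})
    (eps : R) (l : Y) :
  0 < crit_index n eps -> (`|crit_index n eps| <= n)%N ->
  (l \in conf_set f x0 (E_max f xc S) eps) =
  (#|[set j | (1 - min_on f (xc j) (S j) < 1 - f x0 l)%R]| < `|crit_index n eps|)%N.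
Proof.
by move=> k_gt0 k_le; rewrite mem_conf_set_count size_E_max // count_map count_enum.
Qed.

Lemma min_on_le (x0 : X) (S : {set Y}) (l : Y) : l \in S -> min_on f x0 S <= f x0 l.
Proof. exact: bigmin_le_cond. Qed.

Lemma leq_card_min_on_scores (n : nat) (xs : 'I_n.+1 -> X) (ys : 'I_n.+1 -> Y)
    (S : 'I_n -> {set Y}) (t : R) :
  (forall j, ys (widen_ord (leqnSn n) j) \in S j) ->
  (#|[set j | (1 - min_on f (xs (widen_ord (leqnSn n) j)) (S j) < t)%R]|
     <= #|[set i | (1 - f (xs i) (ys i) < t)%R]|)%N.
Proof.
move=> yS; have wid_inj : injective (widen_ord (leqnSn n)).
  by move=> i j [] /val_inj.
rewrite -(card_imset _ wid_inj); apply/subset_leq_card/fintype.subsetP.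
move=> _ /imsetP[j + ->]; rewrite !inE; apply: le_lt_trans.
by rewrite lerD2l lerN2 min_on_le.
Qed.

End prediction_set.

Local Open Scope classical_set_scope.

Section finite_valued_measurability.
Context d (Om : measurableType d).

Lemma measurable_fin_preimage (T : finType) (g : Om -> T) (Q : set T) :
  (forall t, measurable [set w | g w = t]) -> measurable (g @^-1` Q).
Proof.
move=> g_fib.
have -> : g @^-1` Q = \bigcup_(t in Q) [set w | g w = t].
  by apply/seteqP; split => [w /= Qw|w [t /= Qt ->]] //; exists (g w).
by apply: fin_bigcup_measurable => //; exact: finite_finset.
Qed.

Lemma measurable_ffun_fiber (I T : finType) (g : I -> Om -> T) :
  (forall i t, measurable [set w | g i w = t]) ->
  forall t : {ffun I -> T}, measurable [set w | [ffun i => g i w] = t].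
Proof.
move=> g_fib t.
have -> : [set w | [ffun i => g i w] = t] =
          \bigcap_(i in [set: I]) [set w | g i w = t i].
  apply/seteqP; split => [w /= <- i _|w /= gt]; first by rewrite ffunE.
  by apply/ffunP => i; rewrite ffunE gt.
by apply: fin_bigcap_measurable => //; exact: finite_finset.
Qed.

Lemma measurable_bool_fiber (b : Om -> bool) :
  measurable [set w | b w] -> forall c : bool, measurable [set w | b w = c].
Proof.
move=> mb [] //; have -> : [set w | b w = false] = ~` [set w | b w].
  by apply/seteqP; split => w /=; case: (b w).
exact: measurableC.
Qed.

Lemma measurable_fun_fin_select d' (U : measurableType d') (T : finType)
    (g : Om -> T) (h : T -> Om -> U) :
  (forall t, measurable [set w | g w = t]) -> (forall t, measurable_fun setT (h t)) ->
  measurable_fun setT (fun w => h (g w) w).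
Proof.
move=> g_fib mh _ B mB; rewrite setTI.
have -> : (fun w => h (g w) w) @^-1` B =
          \bigcup_(t in [set: T]) ([set w | g w = t] `&` h t @^-1` B).
  by apply/seteqP; split => [w /= hB|w [t _ [/= <-]]] //; exists (g w).
apply: fin_bigcup_measurable => [|t _]; first exact: finite_finset.
by apply: measurableI => //; rewrite -[E in measurable E]setTI; exact: mh.
Qed.

Lemma measurable_ltr_set (R : realType) (a b : Om -> R) :
  measurable_fun setT a -> measurable_fun setT b -> measurable [set w | a w < b w].
Proof.
move=> ma mb; have := measurable_fun_ltr ma mb measurableT (Y := [set true]) I.
by rewrite setTI.
Qed.

Lemma measurable_fun_bigmin (R : realType) (I : Type) (r : seq I) (P : pred I)
    (h : I -> Om -> R) (x0 : R) :
  (forall i, measurable_fun setT (h i)) ->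
  measurable_fun setT (fun w => \big[Num.min/x0]_(i <- r | P i) h i w).
Proof.
move=> mh; elim: r => [|i r IH].
  by under eq_fun do rewrite big_nil; exact: measurable_cst.
under eq_fun do rewrite big_cons.
by case: (P i) => //; exact: measurable_minr.
Qed.

Lemma measurable_card_lt (I : finType) (b : I -> Om -> bool) (K : nat) :
  (forall i, measurable [set w | b i w]) -> measurable [set w | (#|[set i | b i w]%SET| < K)%N].
Proof.
move=> mb; pose g w := [ffun i => b i w].
have card_g w : #|[set i | g w i]%SET| = #|[set i | b i w]%SET|.
  by apply: eq_card => i; rewrite !inE ffunE.
have -> : [set w | (#|[set i | b i w]%SET| < K)%N] = [set w | (#|[set i | g w i]%SET| < K)%N].
  by apply/seteqP; split => w /=; rewrite card_g.
apply: (measurable_fin_preimage (g := g) (fun v => #|[set i | v i]%SET| < K)%N).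
by apply: measurable_ffun_fiber => i; exact: measurable_bool_fiber.
Qed.

Lemma measurable_min_on (R : realType) dX (X : measurableType dX) (Y : finType)
    (f : X -> Y -> R) (xw : Om -> X) (S : Om -> {set Y}) :
  (forall l, measurable_fun setT (f^~ l)) -> measurable_fun setT xw ->
  (forall A, measurable [set w | S w = A]) ->
  measurable_fun setT (fun w => min_on f (xw w) (S w)).
Proof.
move=> mf mxw mS.
apply: (measurable_fun_fin_select (g := S) (h := fun A w => min_on f (xw w) A)) => // A.
by apply: measurable_fun_bigmin => l; exact: measurableT_comp (mf l) mxw.
Qed.

End finite_valued_measurability.

Lemma le_sum_measure_cover d (T : measurableType d) (R : realType) (mu : measure T R)
    (I : finType) (b : I -> T -> bool) (K : nat) :
  (forall i, measurable [set w | b i w]) -> (forall w, (K <= #|[set i | b i w]%SET|)%N) ->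
  ((K%:R)%:E * mu setT <= \sum_(i : I) mu [set w | b i w])%E.
Proof.
move=> mb cover.
have m_indic i : measurable_fun setT (fun w => (\1_[set w | b i w] w : R)%:E).
  by apply/measurable_EFinP; exact: measurable_indic.
have -> : \sum_(i : I) mu [set w | b i w] =
          (\int[mu]_(w in setT) \sum_(i : I) (\1_[set w | b i w] w)%:E)%E.
  rewrite ge0_integral_sum //; apply: eq_bigr => i _.
  by rewrite integral_indic // setIT.
rewrite -integral_cst //; apply: ge0_le_integral => //.
- by move=> w _; rewrite lee_fin.
- by apply: emeasurable_sum => i; exact: m_indic.
move=> w _; rewrite sumEFin lee_fin /=.
apply: le_trans (_ : #|[set i | b i w]%SET|%:R <= _); first by rewrite ler_nat.
rewrite -sum1_card natr_sum [leLHS]big_mkcond /=; apply: ler_sum => i _.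
by rewrite finset.in_set indicE; case: ifP => // bw; rewrite mem_set.
Qed.

Section rectangles.
Context dX (X : measurableType dX) (Z : pointedType) (N : nat).

Definition rectangles : set (set ('I_N -> X * Z)) :=
  [set C | exists (A : 'I_N -> set X) (B : 'I_N -> set Z), (forall i, measurable (A i)) /\
     C = \bigcap_(i in [set: 'I_N]) [set z | A i (z i).1 /\ B i (z i).2]].

Local Notation rect_space := (g_sigma_algebraType rectangles).

Lemma rectangles_setI_closed : setI_closed rectangles.
Proof.
move=> _ _ [A1 [B1 [mA1 ->]]] [A2 [B2 [mA2 ->]]].
exists (fun i => A1 i `&` A2 i), (fun i => B1 i `&` B2 i).
split => [i|]; first exact: measurableI.
apply/seteqP; split => z /=.
  by move=> [z1 z2] i _; have [? ?] := z1 i I; have [? ?] := z2 i I.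
by move=> z12; split => i _; have [[? ?] [? ?]] := z12 i I.
Qed.

Lemma rectanglesT : rectangles setT.
Proof. by exists (fun=> setT), (fun=> setT); split => //; apply/seteqP; split. Qed.

Lemma measurable_rect_fst j : measurable_fun setT (fun z : rect_space => (z j).1).
Proof.
move=> _ A mA; apply: sub_sigma_algebra.
exists (fun i => if i == j then A else setT), (fun=> setT); split.
  by move=> i; case: ifP.
apply/seteqP; split => z /=.
  by move=> [_ Az] i _; case: ifP => [/eqP ->|].
by move=> zA; split => //; have := zA j I; rewrite eqxx; case.
Qed.

Lemma measurable_rect_snd_fiber j t : measurable [set z : rect_space | (z j).2 = t].
Proof.
apply: sub_sigma_algebra.
exists (fun=> setT), (fun i => if i == j then [set t] else setT); split => //.
apply/seteqP; split => z /=.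
  by move=> zt i _; case: ifP => [/eqP ->|].
by move=> zt; have := zt j I; rewrite eqxx; case.
Qed.

End rectangles.
Arguments rectangles {dX} X Z N.

Section exchangeable_scores.
Context d (Omega : measurableType d) (R : realType) (P : probability Omega R)
  dX (X : measurableType dX) (Y : finType) (N : nat)
  (x : 'I_N -> Omega -> X) (y : 'I_N -> Omega -> Y).
Hypotheses (hxm : forall i, measurable_fun setT (x i))
  (hym : forall i l, measurable [set w | y i w = l]).

(* Labels are wrapped in [Some] because [g_sigma_algebraType] needs a pointed
   carrier and [Y] may be empty. *)
Local Notation sample_space := (g_sigma_algebraType (rectangles X (option Y) N)).

Definition sample (s : 'I_N -> 'I_N) (w : Omega) : sample_space :=
  fun j => (x (s j) w, Some (y (s j) w)).

Lemma measurable_sample s : measurable_fun setT (sample s).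
Proof.
apply: (@measurability _ _ Omega sample_space setT _ (rectangles X (option Y) N) erefl).
move=> _ [C [A [B [mA ->]]] <-]; rewrite setTI.
have -> : sample s @^-1` (\bigcap_(i in [set: 'I_N]) [set z | A i (z i).1 /\ B i (z i).2]) =
          \bigcap_(i in [set: 'I_N])
            (x (s i) @^-1` A i `&` y (s i) @^-1` (B i \o Some)).
  by apply/seteqP; split => w /= h i _; have [? ?] := h i I.
apply: fin_bigcap_measurable => [|i _]; first exact: finite_finset.
apply: measurableI; last exact: measurable_fin_preimage.
by rewrite -[E in measurable E]setTI; exact: hxm.
Qed.

Hypothesis hexch : exchangeable P x y.

Lemma exchangeable_sample (s : {perm 'I_N}) (C : set sample_space) :
  measurable C -> P (sample s @^-1` C) = P (sample id @^-1` C).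
Proof.
move=> mC.
have := @measure_unique _ R sample_space (rectangles X (option Y) N) (fun=> setT) erefl
  (@rectangles_setI_closed _ _ _ _) (fun=> @rectanglesT _ _ _ _)
  _ (pushforward P (sample s)) (pushforward P (sample id)) _ _ C mC.
apply=> [||| ? ? _ [A [B [mA ->]]] | m1 _].
- by apply/seteqP; split => // z _; exists 0%N.
- exact: measurable_sample.
- exact: measurable_sample.
- by rewrite /pushforward /sample; exact: (@hexch s A (fun i l => B i (Some l)) mA).
- rewrite /pushforward; apply: le_lt_trans (probability_le1 _ _) (ltry 1).
  by rewrite -[E in measurable E]setTI; exact: m1.
Qed.

Variable score : X -> Y -> R.
Hypothesis score_meas : forall l, measurable_fun setT (score^~ l).

Lemma measurable_score j : measurable_fun setT (fun w => score (x j w) (y j w)).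
Proof.
apply: (measurable_fun_fin_select (g := y j) (h := fun l w => score (x j w) l)) => // l.
exact: measurableT_comp (score_meas l) (hxm j).
Qed.

Lemma measurable_score_rank_lt (K : nat) (i : 'I_N) :
  measurable [set w | (score_rank (fun j => score (x j w) (y j w)) i < K)%N].
Proof.
by apply: measurable_card_lt => j; apply: measurable_ltr_set; exact: measurable_score.
Qed.

Definition sample_score (z : sample_space) (j : 'I_N) : R :=
  if (z j).2 is Some l then score (z j).1 l else 0.

Lemma measurable_sample_score j : measurable_fun setT (sample_score^~ j).
Proof.
apply: (measurable_fun_fin_select (g := fun z : sample_space => (z j).2)
          (h := fun o z => if o is Some l then score (z j).1 l else 0)).
  exact: measurable_rect_snd_fiber.
move=> [l|]; last exact: measurable_cst.
exact: measurableT_comp (score_meas l) (measurable_rect_fst j).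
Qed.

Lemma probability_score_rank_lt_eq (K : nat) (i i0 : 'I_N) :
  P [set w | (score_rank (fun j => score (x j w) (y j w)) i < K)%N] =
  P [set w | (score_rank (fun j => score (x j w) (y j w)) i0 < K)%N].
Proof.
pose C := [set z : sample_space | (score_rank (sample_score z) i0 < K)%N].
have mC : measurable C.
  by apply: measurable_card_lt => j; apply: measurable_ltr_set; exact: measurable_sample_score.
have rank_sample (s : {perm 'I_N}) w : score_rank (sample_score (sample s w)) i0 =
    score_rank (fun j => score (x j w) (y j w)) (s i0) := score_rank_perm _ s i0.
transitivity (P (sample (tperm i i0) @^-1` C)).
  by congr (P _); apply/funext => w; rewrite /C /preimage /= rank_sample tpermR.
exact: exchangeable_sample.
Qed.

Lemma probability_score_rank_lt (K : nat) (i0 : 'I_N) : (K <= N)%N ->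
  ((K%:R / N%:R)%:E <=
   P [set w | (score_rank (fun j => score (x j w) (y j w)) i0 < K)%N])%E.
Proof.
move=> K_le; set p := P _.
have N_gt0 : (0 < N)%N := leq_ltn_trans (leq0n i0) (ltn_ord i0).
have K_le_card : (K <= #|'I_N|)%N by rewrite card_ord.
have := le_sum_measure_cover P (b := fun i w => (score_rank (fun j => score (x j w) (y j w)) i < K)%N)
  (measurable_score_rank_lt K) (fun w => leq_card_score_rank_lt _ K_le_card).
rewrite [X in (_ * X <= _)%E -> _](_ : _ = 1%E) ?mule1; last exact: probability_setT.
have fin_p : p \is a fin_num by exact: fin_num_measure (measurable_score_rank_lt K i0).
rewrite [X in (_ <= X)%E -> _](_ : _ = \sum_(i < N) (fine p)%:E); last first.
  by apply: eq_bigr => i _; rewrite fineK //; exact: probability_score_rank_lt_eq.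
rewrite sumEFin sumr_const card_ord -(fineK fin_p) !lee_fin => cover.
by rewrite ler_pdivrMr ?ltr0n // mulr_natr.
Qed.

End exchangeable_scores.

Theorem theorem1 (d : measure_display) (Omega : measurableType d)
  (R : realType) (P : probability Omega R)
  (dX : measure_display) (X : measurableType dX) (Y : finType)
  (f : X -> Y -> R)
  (hf0 : forall x l, 0 <= f x l)
  (hf1 : forall x, \sum_(l : Y) f x l = 1)
  (hfm : forall l, measurable_fun setT (fun x => f x l))
  (n : nat)
  (x : 'I_n.+1 -> Omega -> X) (y : 'I_n.+1 -> Omega -> Y)
  (Sc : 'I_n -> Omega -> {set Y})
  (hxm : forall i, measurable_fun setT (x i))
  (hym : forall i l, measurable [set w | y i w = l])
  (hSm : forall j A, measurable [set w | Sc j w = A])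
  (hyS : forall j w, y (widen_ord (leqnSn n) j) w \in Sc j w)
  (hexch : exchangeable P x y)
  (eps : R) (heps : 0 < eps <= 1) :
  ((1 - eps)%:E <=
   P [set w | y ord_max w \in
        conf_set f (x ord_max w)
          (E_max f (fun j => x (widen_ord (leqnSn n) j) w) (fun j => Sc j w))
          eps])%E.
Proof.
case/andP: heps => eps_gt0 _.
set F := [set w | _]; set k := crit_index n eps.
have [k_le0 | k_gt0] := lerP k 0.
  apply: le_trans (measure_ge0 P F); rewrite lee_fin; exact: crit_index_le0 k_le0.
have [n_lt_k | k_le_n] := ltnP n `|k|.
  suff -> : F = setT by rewrite probability_setT lee_fin gerBl ltW.
  by apply/seteqP; split => // w _; rewrite /F /= conf_set_pinfty ?size_E_max ?finset.in_setT.
set K := `|k|%N; set wid := widen_ord (leqnSn n).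
have score_meas l : measurable_fun setT (fun a => 1 - f a l).
  exact: measurable_funB (measurable_cst _) (hfm l).
have F_eq : F = [set w | (#|[set j | (1 - min_on f (x (wid j) w) (Sc j w)
                                       < 1 - f (x ord_max w) (y ord_max w))%R]%SET| < K)%N].
  by apply/seteqP; split => w; rewrite /F /= mem_conf_set_E_max.
have mF : measurable F.
  rewrite F_eq; apply: measurable_card_lt => j; apply: measurable_ltr_set.
    exact: measurable_funB (measurable_cst _) (measurable_min_on hfm (hxm _) (hSm j)).
  exact: (measurable_score hxm hym score_meas).
have low_sub :
    [set w | (score_rank (fun i => (1 - f (x i w) (y i w))%R) ord_max < K)%N] `<=` F.
  move=> w low; rewrite F_eq /=; apply: leq_ltn_trans low.
  exact: leq_card_min_on_scores.
have m_low := measurable_score_rank_lt hxm hym score_meas K ord_max.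
apply: le_trans (le_measure P (mem_set m_low) (mem_set mF) low_sub).
have K_le : (K <= n.+1)%N by apply: leq_trans k_le_n _.
apply: le_trans (probability_score_rank_lt hxm hym hexch score_meas ord_max K_le).
by rewrite lee_fin; exact: le_crit_index_div.
Qed.
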